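(* Let $R$ be a commutative ring in which $2$ is invertible, let $Q$ be a quadratic space over $R$, and let $M=Q\perp\mathbb{H}(R)$. Then the DSER elementary orthogonal group coincides with the elementary orthogonal transvection group: $\mathrm{EO}_R(Q,\mathbb{H}(R))=\mathrm{ETransO}(M)$.
   Context: A quadratic $R$-module $(Q,q)$ is a finitely generated projective $R$-module with a quadratic form $q$; its bilinear form is $\langle x,y\rangle=q(x+y)-q(x)-q(y)$ (so $\langle x,x\rangle=2q(x)$). It is a quadratic space if $z\mapsto\langle z,-\rangle$ is an isomorphism $Q\to Q^*=\mathrm{Hom}_R(Q,R)$. For a finitely generated projective $P$, the hyperbolic space $\mathbb{H}(P)=P\oplus P^*$ carries $q(x,f)=f(x)$, i.e. $\langle(x_1,f_1),(x_2,f_2)\rangle=f_2(x_1)+f_1(x_2)$; orthogonal sums carry the sum of the forms. Here $P=R$ and $\mathbb{H}(R)$ has basis $x,f$ with $f(x)=1$. DSER transformations on $Q\perp\mathbb{H}(P)$: for $R$-linear $\alpha:Q\to P$, let $\alpha^*:P^*\to Q$ be determined by $\langle\alpha^*(g),z\rangle=g(\alpha(z))$ for all $z\in Q$, and set $E_\alpha(z,y,g)=(z-\alpha^*(g),\,y+\alpha(z)-\tfrac12\alpha\alpha^*(g),\,g)$. For $R$-linear $\beta:Q\to P^*$, let $\beta^*:P\to Q$ be determined by $\langle\beta^*(y),z\rangle=\beta(z)(y)$, and set $E^*_\beta(z,y,g)=(z-\beta^*(y),\,y,\,g+\beta(z)-\tfrac12\beta\beta^*(y))$. $\mathrm{EO}_R(Q,\mathbb{H}(P))$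 is the group generated by all $E_\alpha$, $E^*_\beta$. Elementary orthogonal transvections on $M=Q\perp\mathbb{H}(R)$: for $w\in Q$, writing elements as $(z,ax+bf)$ with $a,b\in R$, set $E^w_1(z,ax+bf)=(z-bw,\,(a+\langle z,w\rangle-bq(w))x+bf)$ and $E^w_2(z,ax+bf)=(z-aw,\,ax+(b+\langle z,w\rangle-aq(w))f)$. $\mathrm{ETransO}(M)$ is the group generated by all $E^w_1,E^w_2$, $w\in Q$. *)

From HB Require Import structures.
From mathcomp Require Import all_boot all_order all_algebra.
Set Implicit Arguments. Unset Strict Implicit. Unset Printing Implicit Defensive.
Import GRing.Theory.
Local Open Scope ring_scope.

Section Quadratic.
Variables (R : comUnitRingType) (Q : lmodType R).

Definition lin_map (U V : lmodType R) (f : U -> V) :=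
  forall (a : R) (x y : U), f (a *: x + y) = a *: f x + f y.
Definition Rlinear (f : Q -> R) :=
  forall (a : R) (x y : Q), f (a *: x + y) = a * f x + f y.

(* finitely generated projective: a direct summand of some free R^n *)
Definition fg_projective :=
  exists (n : nat) (i : Q -> 'rV[R]_n) (p : 'rV[R]_n -> Q),
    lin_map i /\ lin_map p /\ cancel i p.

Definition polar (q : Q -> R) (x y : Q) : R := q (x + y) - q x - q y.

Definition is_quadratic_form (q : Q -> R) :=
  (forall (a : R) (x : Q), q (a *: x) = a ^+ 2 * q x) /\
  (forall y, Rlinear (fun x => polar q x y)) /\
  (forall x, Rlinear (polar q x)).

(* quadratic space: z |-> <z,-> is an isomorphism Q -> Q^* = Hom_R(Q,R) *)
Definition quadratic_space (q : Q -> R) :=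
  [/\ is_quadratic_form q,
      (forall z1 z2, polar q z1 =1 polar q z2 -> z1 = z2) &
      (forall phi : Q -> R, Rlinear phi -> exists z, polar q z =1 phi)].

(* M = Q _|_ H(R); an element (z, (a, b)) stands for z + a x + b f,
   where x is the basis of P = R and f the dual basis of P^* (f(x) = 1).
   A functional g in P^* is identified with g(x), i.e. g = g(x) f. *)
Definition MT := (Q * (R * R))%type.

(* DSER transformation E_alpha, alpha : Q -> P = R, alphas = alpha^* : P^* -> Q *)
Definition adjoint_alpha (q : Q -> R) (alpha : Q -> R) (alphas : R -> Q) :=
  forall (g : R) (z : Q), polar q (alphas g) z = g * alpha z.

Definition E_alpha (alpha : Q -> R) (alphas : R -> Q) (m : MT) : MT :=
  let: (z, (y, g)) := m in
  (z - alphas g, (y + alpha z - 2%:R^-1 * alpha (alphas g), g)).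

(* DSER transformation E^*_beta, beta : Q -> P^* = R, betas = beta^* : P -> Q *)
Definition adjoint_beta (q : Q -> R) (beta : Q -> R) (betas : R -> Q) :=
  forall (y : R) (z : Q), polar q (betas y) z = beta z * y.

Definition Es_beta (beta : Q -> R) (betas : R -> Q) (m : MT) : MT :=
  let: (z, (y, g)) := m in
  (z - betas y, (y, g + beta z - 2%:R^-1 * beta (betas y))).

Definition DSER_gen (q : Q -> R) (s : MT -> MT) :=
  (exists alpha alphas, Rlinear alpha /\ adjoint_alpha q alpha alphas /\
     s =1 E_alpha alpha alphas) \/
  (exists beta betas, Rlinear beta /\ adjoint_beta q beta betas /\
     s =1 Es_beta beta betas).

Definition E1 (q : Q -> R) (w : Q) (m : MT) : MT :=
  let: (z, (a, b)) := m in
  (z - b *: w, (a + polar q z w - b * q w, b)).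
Definition E2 (q : Q -> R) (w : Q) (m : MT) : MT :=
  let: (z, (a, b)) := m in
  (z - a *: w, (a, b + polar q z w - a * q w)).

Definition Trans_gen (q : Q -> R) (s : MT -> MT) :=
  exists w, s =1 E1 q w \/ s =1 E2 q w.

End Quadratic.

Inductive gen_group (T : Type) (S : (T -> T) -> Prop) : (T -> T) -> Prop :=
| gg_id : gen_group S id
| gg_gen s t : S s -> gen_group S t -> gen_group S (s \o t)
| gg_inv s s' t : S s -> cancel s s' -> cancel s' s -> gen_group S t ->
    gen_group S (s' \o t)
| gg_ext s t : gen_group S s -> s =1 t -> gen_group S t.

Definition EO (R : comUnitRingType) (Q : lmodType R) (q : Q -> R) :=
  gen_group (DSER_gen q).
Definition ETransO (R : comUnitRingType) (Q : lmodType R) (q : Q -> R) :=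
  gen_group (Trans_gen q).

From mathcomp Require Import all_boot all_order all_algebra.
From mathcomp Require Import ring.
Set Implicit Arguments. Unset Strict Implicit.
Import GRing.Theory.
Local Open Scope ring_scope.

(* For P = R the two generating sets coincide. Given w in Q, the form
   alpha = <-, w> has adjoint alpha^*(g) = g w, and alpha (alpha^*(g)) / 2
   = g q(w); hence E_alpha = E_1^w and E^*_alpha = E_2^w. Conversely, in a
   quadratic space every linear form alpha : Q -> R is <-, w> for some w,
   and nondegeneracy forces alpha^*(g) = g w. *)

Lemma gen_groupS (T : Type) (S S' : (T -> T) -> Prop) :
  (forall s, S s -> S' s) -> forall s, gen_group S s -> gen_group S' s.
Proof.
move=> sSS' s; elim=> {s}.
- exact: gg_id.
- by move=> s t /sSS' S's _; apply: gg_gen.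
- by move=> s s' t /sSS' S's ss' s's _; apply: (gg_inv S's ss' s's).
- by move=> s t _ gen_s; apply: gg_ext.
Qed.

Section QuadraticForm.
Variables (R : comUnitRingType) (Q : lmodType R) (q : Q -> R).
Hypothesis qformP : is_quadratic_form q.

Lemma polarC x y : polar q x y = polar q y x.
Proof. by rewrite /polar (addrC y x); ring. Qed.

Lemma qform0 : q 0 = 0.
Proof. by have := qformP.1 0 0; rewrite scale0r expr0n mul0r. Qed.

Lemma polarZl a x y : polar q (a *: x) y = a * polar q x y.
Proof.
have := qformP.2.1 y a x 0; rewrite addr0 => ->.
by rewrite /polar add0r qform0 subr0 subrr addr0.
Qed.

Lemma polar_diag w : polar q w w = 2%:R * q w.
Proof. by rewrite /polar -[w + w]/(w *+ 2) -scaler_nat qformP.1; ring. Qed.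

Lemma E_alpha_ext (alpha alpha' : Q -> R) (alphas alphas' : R -> Q) :
  alpha =1 alpha' -> alphas =1 alphas' ->
  E_alpha alpha alphas =1 E_alpha alpha' alphas'.
Proof.
by move=> eq_alpha eq_alphas [z [y g]]; rewrite /= eq_alphas !eq_alpha.
Qed.

Lemma Es_beta_ext (beta beta' : Q -> R) (betas betas' : R -> Q) :
  beta =1 beta' -> betas =1 betas' ->
  Es_beta beta betas =1 Es_beta beta' betas'.
Proof. by move=> eq_beta eq_betas [z [y g]]; rewrite /= eq_betas !eq_beta. Qed.

Lemma adjoint_alpha_polar w :
  adjoint_alpha q (polar q ^~ w) (fun g => g *: w).
Proof. by move=> g z; rewrite polarZl polarC. Qed.

Lemma adjoint_beta_polar w :
  adjoint_beta q (polar q ^~ w) (fun y => y *: w).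
Proof. by move=> y z; rewrite polarZl polarC mulrC. Qed.

Hypothesis two_unit : (2%:R : R) \is a GRing.unit.

Lemma half_polarZ_diag g w : 2%:R^-1 * polar q (g *: w) w = g * q w.
Proof. by rewrite polarZl polar_diag mulrCA (mulKr two_unit). Qed.

Lemma E1_E_alpha w : E1 q w =1 E_alpha (polar q ^~ w) (fun g => g *: w).
Proof. by move=> [z [y g]]; rewrite /= half_polarZ_diag. Qed.

Lemma E2_Es_beta w : E2 q w =1 Es_beta (polar q ^~ w) (fun y => y *: w).
Proof. by move=> [z [y g]]; rewrite /= half_polarZ_diag. Qed.

Lemma Trans_gen_DSER s : Trans_gen q s -> DSER_gen q s.
Proof.
case=> w [] eq_s; [left | right]; exists (polar q ^~ w), (fun g => g *: w).
- split; [exact: qformP.2.1 | split; first exact: adjoint_alpha_polar].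
  by move=> m; rewrite eq_s E1_E_alpha.
- split; [exact: qformP.2.1 | split; first exact: adjoint_beta_polar].
  by move=> m; rewrite eq_s E2_Es_beta.
Qed.

Hypothesis polar_inj : forall z1 z2, polar q z1 =1 polar q z2 -> z1 = z2.
Hypothesis polar_onto :
  forall phi : Q -> R, Rlinear phi -> exists z, polar q z =1 phi.

Lemma adjoint_polar (alpha : Q -> R) (alphas : R -> Q) w :
  (forall g z, polar q (alphas g) z = g * alpha z) ->
  polar q w =1 alpha -> alphas =1 (fun g => g *: w).
Proof.
move=> adj_alpha eq_alpha g; apply: polar_inj => z.
by rewrite adj_alpha polarZl eq_alpha.
Qed.

Lemma DSER_gen_Trans s : DSER_gen q s -> Trans_gen q s.
Proof.
case=> [[alpha [alphas [lin_alpha [adj_alpha eq_s]]]]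
       |[beta [betas [lin_beta [adj_beta eq_s]]]]].
- have [w eq_alpha] := polar_onto lin_alpha.
  have eq_alphas := adjoint_polar adj_alpha eq_alpha.
  have eq_alpha' : alpha =1 polar q ^~ w by move=> z; rewrite -eq_alpha polarC.
  exists w; left => m; rewrite eq_s E1_E_alpha.
  exact: E_alpha_ext.
- have [w eq_beta] := polar_onto lin_beta.
  have adj_beta' g z : polar q (betas g) z = g * beta z.
    by rewrite adj_beta mulrC.
  have eq_betas := adjoint_polar adj_beta' eq_beta.
  have eq_beta' : beta =1 polar q ^~ w by move=> z; rewrite -eq_beta polarC.
  exists w; right => m; rewrite eq_s E2_Es_beta.
  exact: Es_beta_ext.
Qed.

End QuadraticForm.

Theorem mainTheorem1 (R : comUnitRingType) (Q : lmodType R) (q : Q -> R) :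
  (2%:R : R) \is a GRing.unit ->
  fg_projective Q ->
  quadratic_space q ->
  forall s : MT Q -> MT Q, EO q s <-> ETransO q s.
Proof.
move=> two_unit _ [qformP polar_inj polar_onto] s.
split; apply: gen_groupS => t.
- exact: DSER_gen_Trans.
- exact: Trans_gen_DSER.
Qed.
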